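(* Let $m,n$ be positive integers with $m\ge n$. Then there exists a private information distinguishing debate game $B=(A,S,P,C_w,C_l)$ such that $|C_w(s)|\ge m$ and $|C_l(s)|\le n$ for all $s\in S$, but $e^{\mathrm{PIDDG}}_B(M)\ge\frac{n}{2m}$ for every policy $M$.
   Context: Let $\delta$ be a special default action. A PIDDG is a tuple $(A,S,P,C_w,C_l)$ with $A$ finite, $\delta\notin A$, $S$ finite, $P$ a probability mass function on $S$, and $C_w,C_l:S\to\mathcal P(A)$. A policy is $M:\{1,2\}\times(A\cup\{\delta\})^2\to[0,1]$ with $M(1,a_1,a_2)+M(2,a_1,a_2)=1$. $G_1(B,M)$ is the following Bayesian game with agents $1,2$. Each agent has action set $A\cup\{\delta\}$ and type set $\mathcal P(A)$. A scenario $s\sim P$ is drawn, and agent 1 gets type $C_w(s)$ while agent 2 gets type $C_l(s)$. Payoffs are as follows: - if both agents play available actions ($a_i\in t_i\cup\{\delta\}$), agent $i$ gets $M(i,a_1,a_2)$; - if exactly one plays an unavailable action, it gets $0$ and the other gets $1$; - if both play unavailable actions, each gets $1/2$. $G_2(B,M)$ is the same with types swapped. The error is $e^{\mathrm{PIDDG}}_B(M)=\frac{v_1(G_2(B,M))+v_2(G_1(B,M))}{2}$, where $v_i$ is the value of the zero-sum Bayesian game to agent $i$. *)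

From HB Require Import structures.
From mathcomp Require Import all_boot all_order all_algebra.
From mathcomp Require Import boolp classical_sets reals.
Set Implicit Arguments. Unset Strict Implicit. Unset Printing Implicit Defensive.
Import Order.TTheory GRing.Theory Num.Theory.
Local Open Scope ring_scope.
Local Open Scope classical_set_scope.

Inductive agent := Ag1 | Ag2.

Section PIDDG.
Variable R : realType.
Variable A : finType.
(* Actions are [option A]; [None] is the default action delta. *)
Variable S : finType.

Definition is_pmf (P : S -> R) : Prop :=
  (forall s, 0 <= P s) /\ \sum_(s : S) P s = 1.

Definition is_policy (M : agent -> option A -> option A -> R) : Prop :=
  (forall i a1 a2, 0 <= M i a1 a2 <= 1) /\
  (forall a1 a2, M Ag1 a1 a2 + M Ag2 a1 a2 = 1).

Definition available (t : {set A}) (a : option A) : bool :=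
  if a is Some x then x \in t else true.

Definition payoff (M : agent -> option A -> option A -> R)
  (t1 t2 : {set A}) (i : agent) (a1 a2 : option A) : R :=
  match available t1 a1, available t2 a2 with
  | true, true => M i a1 a2
  | false, true => if i is Ag1 then 0 else 1
  | true, false => if i is Ag1 then 1 else 0
  | false, false => 1 / 2
  end.

Definition is_strategy (sg : {set A} -> option A -> R) : Prop :=
  forall t, (forall a, 0 <= sg t a) /\ \sum_(a : option A) sg t a = 1.

Definition exp_payoff (P : S -> R) (T1 T2 : S -> {set A})
  (M : agent -> option A -> option A -> R) (i : agent)
  (sg1 sg2 : {set A} -> option A -> R) : R :=
  \sum_(s : S) P s * \sum_(a1 : option A) \sum_(a2 : option A)
     sg1 (T1 s) a1 * sg2 (T2 s) a2 * payoff M (T1 s) (T2 s) i a1 a2.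

Definition game_value (P : S -> R) (T1 T2 : S -> {set A})
  (M : agent -> option A -> option A -> R) (i : agent) : R :=
  match i with
  | Ag1 => sup [set x | exists sg1, is_strategy sg1 /\
             x = inf [set y | exists sg2, is_strategy sg2 /\
                        y = exp_payoff P T1 T2 M Ag1 sg1 sg2]]
  | Ag2 => sup [set x | exists sg2, is_strategy sg2 /\
             x = inf [set y | exists sg1, is_strategy sg1 /\
                        y = exp_payoff P T1 T2 M Ag2 sg1 sg2]]
  end.

(* e_B(M) = (v_1(G_2(B,M)) + v_2(G_1(B,M))) / 2, where G_1 gives agent 1
   type C_w(s) and agent 2 type C_l(s), and G_2 swaps them. *)
Definition piddg_error (P : S -> R) (Cw Cl : S -> {set A})
  (M : agent -> option A -> option A -> R) : R :=
  (game_value P Cl Cw M Ag1 + game_value P Cw Cl M Ag2) / 2.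

End PIDDG.

From mathcomp Require Import all_boot all_order all_algebra.
From mathcomp Require Import boolp classical_sets reals.
From mathcomp Require Import lra ring.
Set Implicit Arguments. Unset Strict Implicit. Unset Printing Implicit Defensive.
Import Order.TTheory GRing.Theory Num.Theory.
Local Open Scope ring_scope.

(* Take A = S = Z/mZ with the uniform distribution, C_w(s) = A and C_l(s) the
   cyclic window {s, ..., s + n - 1}, so that every action is available to the
   liar in exactly n of the m scenarios.  In either game the agent holding
   C_l(s) can play a mixed strategy of the one-shot matrix game M, replacing
   unavailable actions by delta; against the uninformed opponent this secures
   n/m of what that strategy guarantees in the matrix game.  By the minimax
   theorem (up to eps, derived from Gordan's theorem of the alternative, itself
   proved by Fourier-Motzkin elimination) the guarantees of the two agents in
   the matrix game add up to 1 - eps, hence v_1(G_2) + v_2(G_1) >= n/m. *)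

Section Alternative.
Variable R : realFieldType.

Definition strict_feasible (I J : finType) (B : I -> J -> R) :=
  exists q : J -> R, (forall j, 0 <= q j) /\ forall i, 0 < \sum_j B i j * q j.

Definition gordan_certificate (I J : finType) (B : I -> J -> R) :=
  exists c : I -> R, [/\ forall i, 0 <= c i, exists i, 0 < c i
                       & forall j, \sum_i c i * B i j <= 0].

Lemma sum_indicator_mul (I : finType) (a : I) (g : I -> R) :
  \sum_i (i == a)%:R * g i = g a.
Proof.
rewrite (bigD1 a) //= eqxx mul1r big1 ?addr0 // => i /negbTE ->.
by rewrite mul0r.
Qed.

(* One step of Fourier-Motzkin elimination: the pairwise conditions say exactly
   that every lower bound [- s f / b f] lies below every upper bound [s g / - b g]. *)
Lemma exists_shift_pos (I : finType) (s b : I -> R) :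
  (forall i, b i <= 0 -> 0 < s i) ->
  (forall f g, 0 < b f -> b g < 0 -> 0 < s f * - b g + s g * b f) ->
  exists2 t, 0 <= t & forall i, 0 < s i + b i * t.
Proof.
move=> s_gt0 s_pair.
pose lo := \big[Num.max/0]_(i | 0 < b i) (- s i / b i).
pose hi := \big[Num.min/(lo + 1)]_(i | b i < 0) (s i / - b i).
have lo_ge0 : 0 <= lo by rewrite /lo; elim/big_rec: _ => // i x _ hx; rewrite le_max hx orbT.
have loP f : 0 < b f -> - s f / b f <= lo.
  by move=> hf; rewrite /lo (bigD1 f) //= le_max lexx.
have hiP g : b g < 0 -> hi <= s g / - b g.
  by move=> hg; rewrite /hi (bigD1 g) //= ge_min lexx.
have lo_lt_hi : lo < hi.
  rewrite /hi; apply: (big_ind (fun y => lo < y)) => [|x y hx hy|g hg].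
  - by rewrite ltrDl ltr01.
  - by rewrite lt_min hx hy.
  have ng : 0 < - b g by rewrite oppr_gt0.
  rewrite /lo; apply: (big_ind (fun y => y < s g / - b g)) => [|x y hx hy|f hf].
  - by rewrite divr_gt0 // s_gt0 // ltW.
  - by rewrite gt_max hx hy.
  rewrite ltr_pdivrMr // mulrAC ltr_pdivlMr //; have := s_pair f g hf hg; lra.
exists ((lo + hi) / 2) => [|i]; first lra.
case: (ltrgtP (b i) 0) => hb.
- have ng : 0 < - b i by rewrite oppr_gt0.
  have := hiP i hb; rewrite ler_pdivlMr // => h.
  have : (lo + hi) / 2 * - b i < hi * - b i by rewrite ltr_pM2r //; lra.
  lra.
- have := loP i hb; rewrite ler_pdivrMr // => h.
  have : lo * b i < (lo + hi) / 2 * b i by rewrite ltr_pM2r //; lra.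
  lra.
- by rewrite hb mul0r addr0 s_gt0 // hb.
Qed.

Section FourierMotzkin.
Variables (I J : finType) (B : I -> J -> R) (k : J).

(* Rows of the system after eliminating column [k]: the rows with [B i k <= 0],
   and for each pair of rows of opposite signs in column [k] the nonnegative
   combination of the two that cancels it. *)
Definition fm_row :=
  ({i : I | B i k <= 0} + {p : I * I | (0 < B p.1 k) && (B p.2 k < 0)})%type.

Definition fm_weight (r : fm_row) (i : I) : R :=
  match r with
  | inl z => (i == val z)%:R
  | inr p => (i == (val p).1)%:R * - B (val p).2 k + (i == (val p).2)%:R * B (val p).1 k
  end.

Definition drop_col (i : I) (j : J) : R := if j == k then 0 else B i j.

Definition fm_matrix (r : fm_row) (j : J) : R := \sum_i fm_weight r i * drop_col i j.

Lemma fm_weight_ge0 r i : 0 <= fm_weight r i.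
Proof.
case: r => [z|[[f g] /= /andP[hf hg]]] /=; first by rewrite ler0n.
by rewrite addr_ge0 // mulr_ge0 ?ler0n // ?oppr_ge0 ltW.
Qed.

Lemma fm_weight_sum r (g : I -> R) :
  \sum_i fm_weight r i * g i =
  match r with
  | inl z => g (val z)
  | inr p => g (val p).1 * - B (val p).2 k + g (val p).2 * B (val p).1 k
  end.
Proof.
case: r => [z|p] /=; first exact: sum_indicator_mul.
under eq_bigr do rewrite mulrDl -!mulrA.
by rewrite big_split /= !sum_indicator_mul mulrC [g _ * B _ _]mulrC.
Qed.

Lemma fm_weight_col_le0 r : \sum_i fm_weight r i * B i k <= 0.
Proof.
rewrite fm_weight_sum; case: r => [[i hi]|p] //=.
by rewrite mulrN mulrC addNr.
Qed.

Lemma fm_matrix_supp (K : {set J}) :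
  (forall i j, j \notin K -> B i j = 0) ->
  forall r j, j \notin K :\ k -> fm_matrix r j = 0.
Proof.
move=> suppB r j; rewrite in_setD1 negb_and negbK => hj.
rewrite /fm_matrix big1 // => i _; rewrite /drop_col.
case: eqP hj => [_ _|_ /= jK]; first by rewrite mulr0.
by rewrite suppB ?mulr0.
Qed.

Lemma fm_feasible : strict_feasible fm_matrix -> strict_feasible B.
Proof.
case=> q [q_ge0 hq].
pose s i := \sum_j drop_col i j * q j.
have s_pos r : 0 < \sum_i fm_weight r i * s i.
  have := hq r; congr (0 < _); rewrite /fm_matrix /s.
  under eq_bigr do rewrite mulr_suml.
  rewrite exchange_big; apply: eq_bigr => i _; rewrite mulr_sumr.
  by apply: eq_bigr => j _; rewrite mulrA.
have [t t_ge0 ht] : exists2 t, 0 <= t & forall i, 0 < s i + B i k * t.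
  apply: exists_shift_pos => [i hi|f g hf hg].
    by have := s_pos (inl (exist _ i hi)); rewrite fm_weight_sum.
  have hp : (0 < B (f, g).1 k) && (B (f, g).2 k < 0) by rewrite hf hg.
  by have := s_pos (inr (exist _ (f, g) hp)); rewrite fm_weight_sum.
exists (fun j => if j == k then t else q j); split=> [j|i]; first by case: eqP.
suff -> : \sum_j B i j * (if j == k then t else q j) = s i + B i k * t by [].
rewrite /s (bigD1 k) //= [in RHS](bigD1 k) //= /drop_col eqxx mul0r add0r addrC.
by congr (_ + _); apply: eq_bigr => j /negbTE ->.
Qed.

Lemma fm_certificate : gordan_certificate fm_matrix -> gordan_certificate B.
Proof.
case=> c [c_ge0 [r0 cr0] hc].
pose d i := \sum_r c r * fm_weight r i.
have d_col j : \sum_i d i * B i j = \sum_r c r * \sum_i fm_weight r i * B i j.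
  rewrite /d; under eq_bigr do rewrite mulr_suml.
  rewrite exchange_big; apply: eq_bigr => r _; rewrite mulr_sumr.
  by apply: eq_bigr => i _; rewrite mulrA.
exists d; split.
- by move=> i; apply: sumr_ge0 => r _; rewrite mulr_ge0 ?fm_weight_ge0.
- have [i wi] : exists i, 0 < fm_weight r0 i.
    case: r0 {cr0} => [[i hi]|[[f g] /= /andP[hf hg]]]; [exists i | exists f].
      by rewrite /= eqxx ltr01.
    by rewrite /= eqxx mul1r ltr_wpDr ?mulr_ge0 ?ler0n ?ltW // oppr_gt0.
  exists i; rewrite /d (bigD1 r0) //= ltr_wpDr ?mulr_gt0 //.
  by apply: sumr_ge0 => r _; rewrite mulr_ge0 ?fm_weight_ge0.
- move=> j; rewrite d_col; case: (eqVneq j k) => [->|jk].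
    by apply: sumr_le0 => r _; exact: mulr_ge0_le0 (fm_weight_col_le0 r).
  by have := hc j; rewrite /fm_matrix /drop_col (negbTE jk).
Qed.

End FourierMotzkin.

Lemma gordan_alternative (I J : finType) (B : I -> J -> R) :
  strict_feasible B \/ gordan_certificate B.
Proof.
suff supp_ind (K : {set J}) (I' : finType) (B' : I' -> J -> R) :
    (forall i j, j \notin K -> B' i j = 0) ->
    strict_feasible B' \/ gordan_certificate B'.
  by apply: (supp_ind [set: J]) => i j; rewrite inE.
have [n] := ubnP #|K|; elim: n K I' B' => // n IH K I' B' le_Kn suppB.
case: (set_0Vmem K) => [K0|[k kK]].
  have B0 i j : B' i j = 0 by apply: suppB; rewrite K0 inE.
  case: (pickP I') => [i0 _|I0]; [right | left].
    exists (fun=> 1); split=> [i||j]; [exact: ler01 | by exists i0; exact: ltr01 |].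
    by rewrite big1 // => i _; rewrite B0 mulr0.
  by exists (fun=> 0); split=> // i; have := I0 i.
have le_Kk : (#|K :\ k| < n)%N by move: le_Kn; rewrite (cardsD1 k) kK.
have [/fm_feasible|/fm_certificate] := IH _ _ _ le_Kk (fm_matrix_supp suppB); by [left|right].
Qed.

End Alternative.

Lemma ler_sum_term (R : numDomainType) (I : finType) (F : I -> R) i :
  (forall j, 0 <= F j) -> F i <= \sum_j F j.
Proof. by move=> F_ge0; rewrite (bigD1 i) //= lerDl sumr_ge0. Qed.

Definition uniform (R : realType) (I : finType) (i : I) : R := #|I|%:R^-1.
Arguments uniform {R I} i.

Section Minimax.
Variable R : realType.

Lemma uniform_pmf (I : finType) (i0 : I) : is_pmf (uniform : I -> R).
Proof.
have I_gt0 : (0 < #|I|)%N by apply/card_gt0P; exists i0.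
split=> [i|]; first by rewrite invr_ge0 ler0n.
by rewrite sumr_const -[_ *+ _]mulr_natl mulfV // pnatr_eq0 -lt0n.
Qed.

Lemma is_pmf_normalize (I : finType) (q : I -> R) :
  (forall i, 0 <= q i) -> 0 < \sum_i q i -> is_pmf (fun i => q i / \sum_j q j).
Proof.
move=> q_ge0 q_sum; split=> [i|]; first by rewrite divr_ge0 // ltW.
by rewrite -mulr_suml mulfV // gt_eqF.
Qed.

Lemma norm_pmf_mean (I : finType) (q : I -> R) (g : I -> R) :
  is_pmf q -> `|\sum_i g i * q i| <= \sum_i `|g i|.
Proof.
move=> [q_ge0 q_sum]; apply: (le_trans (ler_norm_sum _ _ _)).
apply: ler_sum => i _; rewrite normrM (ger0_norm (q_ge0 i)).
by apply: ler_piMr => //; rewrite -q_sum; apply: ler_sum_term.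
Qed.

Lemma minimax_approx (I J : finType) (G : I -> J -> R) (i0 : I) (j0 : J) (eps : R) :
  0 < eps ->
  exists c (p : I -> R) (q : J -> R),
    [/\ is_pmf p, is_pmf q, forall j, c <= \sum_i p i * G i j
      & forall i, \sum_j G i j * q j <= c + eps].
Proof.
move=> eps_gt0.
pose U := [set c : R | exists2 q : J -> R,
                         is_pmf q & forall i, \sum_j G i j * q j < c]%classic.
pose bound := \sum_i \sum_j `|G i j|.
have row_bound i q : is_pmf q -> `|\sum_j G i j * q j| <= bound.
  move=> q_pmf; apply: (le_trans (norm_pmf_mean _ q_pmf)).
  by apply: (ler_sum_term (F := fun i => \sum_j `|G i j|)) => i'; rewrite sumr_ge0.
have U_inf : has_inf U.
  split.
    exists (bound + 1), uniform => [|i]; first exact: uniform_pmf.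
    apply: le_lt_trans (ler_normlW (row_bound i _ (uniform_pmf j0))) _.
    by rewrite ltrDl ltr01.
  exists (- bound) => c [q q_pmf /(_ i0) /ltW]; apply: le_trans.
  exact/lerNnormlW/row_bound.
pose c := inf U - eps / 2.
have c_notin : ~ U c.
  by move=> Uc; have := ge_inf U_inf.2 Uc; rewrite /c; lra.
have [c1 [q q_pmf hq] c1_lt] := inf_adherent (divr_gt0 eps_gt0 (ltr0n R 2)) U_inf.
(* No column strategy holds every row strictly below [c], so Gordan's
   alternative for [c - G] yields a row strategy securing [c]. *)
have [[r [r_ge0 hr]]|[p [p_ge0 [i1 p_i1] hp]]] :=
  gordan_alternative (fun i j => c - G i j).
  have r_sum : 0 < \sum_j r j.
    rewrite lt_def sumr_ge0 // andbT; apply/negP => /eqP /psumr_eq0P r0.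
    by have := hr i0; rewrite big1 ?ltxx // => j _; rewrite r0 ?mulr0.
  case: c_notin; exists (fun j => r j / \sum_j' r j') => [|i].
    exact: is_pmf_normalize.
  have := hr i; under eq_bigr do rewrite mulrBl.
  rewrite sumrB -mulr_sumr subr_gt0 => h.
  by under eq_bigr do rewrite mulrA; rewrite -mulr_suml ltr_pdivrMr.
have p_sum : 0 < \sum_i p i by apply: (lt_le_trans p_i1); exact: ler_sum_term.
exists c, (fun i => p i / \sum_i' p i'), q; split=> // [|j|i].
- exact: is_pmf_normalize.
- have := hp j; under eq_bigr do rewrite mulrBr.
  rewrite sumrB -mulr_suml subr_le0 => h.
  by under eq_bigr do rewrite mulrAC; rewrite -mulr_suml ler_pdivlMr // mulrC.
- by apply/ltW/(lt_trans (hq i)); rewrite /c; lra.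
Qed.

End Minimax.

Lemma guarantee_le_sup_inf (R : realType) (X Y : Type) (PX : X -> Prop) (PY : Y -> Prop)
    (F : X -> Y -> R) (lo hi b : R) (x : X) (y0 : Y) :
  PY y0 -> (forall x y, PX x -> PY y -> lo <= F x y <= hi) ->
  PX x -> (forall y, PY y -> b <= F x y) ->
  b <= sup [set v | exists x, PX x /\ v = inf [set w | exists y, PY y /\ w = F x y]]%classic.
Proof.
move=> PYy0 F_bnd PXx b_le.
pose infF x := inf [set w | exists y, PY y /\ w = F x y]%classic.
have infF_le x' : PX x' -> infF x' <= hi.
  move=> PXx'; apply: (@le_trans _ _ (F x' y0)); last by case/andP: (F_bnd _ _ PXx' PYy0).
  apply: ge_inf; last by exists y0.
  by exists lo => _ [y [PYy ->]]; case/andP: (F_bnd _ _ PXx' PYy).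
apply: (@le_trans _ _ (infF x)).
  by apply: lb_le_inf => [|_ [y [PYy ->]]]; [exists (F x y0), y0 | exact: b_le].
apply: sup_upper_bound; last by exists x.
by split; [exists (infF x), x | exists hi => _ [x' [PXx' ->]]; exact: infF_le].
Qed.

Lemma sum_option (V : nmodType) (T : finType) (F : option T -> V) :
  \sum_o F o = F None + \sum_t F (Some t).
Proof.
rewrite (bigD1 None) //= (reindex_omap Some id) => [|[] //].
by congr (_ + _); apply: eq_bigl => t; rewrite eqxx.
Qed.

Section Games.
Variables (R : realType) (A : finType).
Implicit Types (M : agent -> option A -> option A -> R) (sg : {set A} -> option A -> R).

Lemma payoff_bounds M t1 t2 i a1 a2 :
  is_policy M -> 0 <= payoff M t1 t2 i a1 a2 <= 1.
Proof.
move=> [M01 _]; rewrite /payoff.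
by case: (available t1 a1); case: (available t2 a2); case: i; rewrite ?lexx ?ler01 //; lra.
Qed.

Lemma exp_payoff_bounds (S : finType) (P : S -> R) T1 T2 M i sg1 sg2 :
  is_pmf P -> is_policy M -> is_strategy sg1 -> is_strategy sg2 ->
  0 <= exp_payoff P T1 T2 M i sg1 sg2 <= 1.
Proof.
move=> [P_ge0 P_sum] M_pol sg1_strat sg2_strat; rewrite /exp_payoff.
have weight_ge0 s a1 a2 : 0 <= sg1 (T1 s) a1 * sg2 (T2 s) a2.
  by rewrite mulr_ge0 //; [case: (sg1_strat (T1 s)) | case: (sg2_strat (T2 s))].
apply/andP; split.
  apply: sumr_ge0 => s _; rewrite mulr_ge0 //; apply: sumr_ge0 => a1 _.
  apply: sumr_ge0 => a2 _; rewrite mulr_ge0 //.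
  by case/andP: (payoff_bounds (T1 s) (T2 s) i a1 a2 M_pol).
rewrite -P_sum; apply: ler_sum => s _; apply: ler_piMr => //.
have [_ sum1] := sg1_strat (T1 s); have [_ sum2] := sg2_strat (T2 s).
apply: (@le_trans _ _ (\sum_a1 \sum_a2 sg1 (T1 s) a1 * sg2 (T2 s) a2)).
  apply: ler_sum => a1 _; apply: ler_sum => a2 _; apply: ler_piMr => //.
  by case/andP: (payoff_bounds (T1 s) (T2 s) i a1 a2 M_pol).
by under eq_bigr do rewrite -mulr_sumr sum2 mulr1; rewrite sum1.
Qed.

Definition default_strategy : {set A} -> option A -> R := fun _ a => (a == None)%:R.

Lemma default_strategyP : is_strategy default_strategy.
Proof.
move=> t; split=> [a|]; first by rewrite ler0n.
by rewrite sum_option big1 ?addr0.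
Qed.

Lemma game_value1_ge (S : finType) (P : S -> R) T1 T2 M sg1 b :
  is_pmf P -> is_policy M -> is_strategy sg1 ->
  (forall sg2, is_strategy sg2 -> b <= exp_payoff P T1 T2 M Ag1 sg1 sg2) ->
  b <= game_value P T1 T2 M Ag1.
Proof.
move=> P_pmf M_pol; apply: guarantee_le_sup_inf default_strategyP _ => sg sg' ? ?.
exact: exp_payoff_bounds.
Qed.

Lemma game_value2_ge (S : finType) (P : S -> R) T1 T2 M sg2 b :
  is_pmf P -> is_policy M -> is_strategy sg2 ->
  (forall sg1, is_strategy sg1 -> b <= exp_payoff P T1 T2 M Ag2 sg1 sg2) ->
  b <= game_value P T1 T2 M Ag2.
Proof.
move=> P_pmf M_pol; apply: guarantee_le_sup_inf default_strategyP _ => sg sg' ? ?.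
exact: exp_payoff_bounds.
Qed.

Definition swap_policy M : agent -> option A -> option A -> R :=
  fun i a1 a2 => M (if i is Ag1 then Ag2 else Ag1) a2 a1.

Lemma swap_policyP M : is_policy M -> is_policy (swap_policy M).
Proof.
move=> [M01 M_sum]; split=> [i a1 a2|a1 a2]; first exact: M01.
by rewrite /swap_policy addrC M_sum.
Qed.

Lemma exp_payoff_swap (S : finType) (P : S -> R) T1 T2 M sg1 sg2 :
  exp_payoff P T1 T2 M Ag2 sg1 sg2 = exp_payoff P T2 T1 (swap_policy M) Ag1 sg2 sg1.
Proof.
apply: eq_bigr => s _; rewrite exchange_big; congr (_ * _).
apply: eq_bigr => a2 _; apply: eq_bigr => a1 _.
by rewrite [sg2 _ _ * _]mulrC /payoff; case: available; case: available.
Qed.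

Lemma swap_policy_mean M q y :
  is_policy M -> is_pmf q ->
  \sum_a q a * swap_policy M Ag1 a y = 1 - \sum_a M Ag1 y a * q a.
Proof.
move=> [_ M_sum] [_ q_sum]; rewrite -q_sum -sumrB; apply: eq_bigr => a _.
rewrite /swap_policy; have -> : M Ag2 y a = 1 - M Ag1 y a by rewrite -(M_sum y a) addrC addKr.
by rewrite mulrBr mulr1 mulrC.
Qed.

Definition restrict_strategy (q : option A -> R) (t : {set A}) (a : option A) : R :=
  if a is Some b then (b \in t)%:R * q a else 1 - \sum_(b in t) q (Some b).

Lemma pmf_mass_None_le1 (q : option A -> R) (t : {set A}) :
  is_pmf q -> q None + \sum_(b in t) q (Some b) <= 1.
Proof.
move=> [q_ge0 q_sum]; rewrite -q_sum sum_option lerD2l big_mkcond /=.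
by apply: ler_sum => b _; case: ifP.
Qed.

Lemma restrict_strategyP q : is_pmf q -> is_strategy (restrict_strategy q).
Proof.
move=> q_pmf t; have [q_ge0 _] := q_pmf; split=> [[b|]|] /=.
- by rewrite mulr_ge0 ?ler0n.
- by have := pmf_mass_None_le1 t q_pmf; have := q_ge0 None; lra.
rewrite sum_option /= [X in _ + X](_ : _ = \sum_(b in t) q (Some b)) ?subrK //.
by rewrite [RHS]big_mkcond; apply: eq_bigr => b _; case: ifP; rewrite ?mul1r ?mul0r.
Qed.

Lemma restrict_strategy_unavailable q t a :
  ~~ available t a -> restrict_strategy q t a = 0.
Proof. by case: a => [b /negbTE /= ->|//]; rewrite mul0r. Qed.

Section Informed.
Variables (S : finType) (P : S -> R) (T : S -> {set A}) (X : R).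
Hypotheses (P_pmf : is_pmf P) (X_ge0 : 0 <= X) (X_le1 : X <= 1).
Hypothesis T_cover : forall b, X <= \sum_s P s * (b \in T s)%:R.

Lemma restrict_strategy_mean q a :
  is_pmf q -> X * q a <= \sum_s P s * restrict_strategy q (T s) a.
Proof.
move=> q_pmf; have [P_ge0 P_sum] := P_pmf; have [q_ge0 _] := q_pmf.
case: a => [b|] /=.
  under eq_bigr do rewrite mulrA.
  by rewrite -mulr_suml; apply: ler_wpM2r (T_cover b).
apply: (@le_trans _ _ (q None)); first exact: ler_piMl.
rewrite -[q None]mul1r -P_sum mulr_suml; apply: ler_sum => s _.
apply: ler_wpM2l => //; have := pmf_mass_None_le1 (T s) q_pmf; lra.
Qed.

Lemma exp_payoff_restrict M q sg2 :
  exp_payoff P T (fun=> [set: A]) M Ag1 (restrict_strategy q) sg2 =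
  \sum_y sg2 [set: A] y *
    \sum_a (\sum_s P s * restrict_strategy q (T s) a) * M Ag1 a y.
Proof.
have pay s a y : restrict_strategy q (T s) a * payoff M (T s) [set: A] Ag1 a y =
                 restrict_strategy q (T s) a * M Ag1 a y.
  rewrite /payoff; have -> : available [set: A] y by case: y => // y; rewrite /= inE.
  case: (boolP (available (T s) a)) => [//|].
  by move/restrict_strategy_unavailable ->; rewrite !mul0r.
rewrite /exp_payoff.
transitivity (\sum_s \sum_y \sum_a
               sg2 [set: A] y * (P s * restrict_strategy q (T s) a * M Ag1 a y)).
  apply: eq_bigr => s _; rewrite exchange_big mulr_sumr; apply: eq_bigr => y _.
  by rewrite mulr_sumr; apply: eq_bigr => a _; rewrite mulrAC pay; ring.
rewrite exchange_big; apply: eq_bigr => y _; rewrite exchange_big mulr_sumr.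
by apply: eq_bigr => a _; rewrite mulr_suml mulr_sumr.
Qed.

Lemma informed_guarantee M q b :
  (forall a y, 0 <= M Ag1 a y) -> is_pmf q -> (forall y, b <= \sum_a q a * M Ag1 a y) ->
  forall sg2, is_strategy sg2 ->
  X * b <= exp_payoff P T (fun=> [set: A]) M Ag1 (restrict_strategy q) sg2.
Proof.
move=> M_ge0 q_pmf b_le sg2 sg2_strat; have [sg2_ge0 sg2_sum] := sg2_strat [set: A].
rewrite exp_payoff_restrict -[X * b]mul1r -sg2_sum mulr_suml.
apply: ler_sum => y _; apply: ler_wpM2l => //.
apply: (@le_trans _ _ (X * \sum_a q a * M Ag1 a y)); first exact: ler_wpM2l.
rewrite mulr_sumr; apply: ler_sum => a _; rewrite mulrA.
exact: ler_wpM2r (restrict_strategy_mean a q_pmf).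
Qed.

End Informed.
End Games.

Section Window.
Variables (R : realType) (k n : nat).

Definition window (s : 'I_k.+1) : {set 'I_k.+1} := [set a | (val (a - s)%R < n)%N].

Lemma card_initial_segment : (n <= k.+1)%N -> #|[set d : 'I_k.+1 | (val d < n)%N]| = n.
Proof.
move=> n_le; rewrite -sum1_card (eq_bigl (fun d : 'I_k.+1 => (d < n)%N)) => [|d].
  by rewrite big_ord_narrow // sum_nat_const card_ord muln1.
by rewrite inE.
Qed.

Lemma card_window s : (n <= k.+1)%N -> #|window s| = n.
Proof.
move=> n_le; have -> : window s = (fun a => a - s) @^-1: [set d | (val d < n)%N].
  by apply/setP => a; rewrite !inE.
by rewrite card_preimset ?card_initial_segment //; exact: subIr.
Qed.

Lemma window_count (a : 'I_k.+1) :
  (n <= k.+1)%N -> \sum_s ((a \in window s)%:R : R) = n%:R.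
Proof.
move=> n_le; have sub_inj : injective (fun s : 'I_k.+1 => a - s).
  by move=> s s' /addrI /oppr_inj.
suff -> : \sum_s ((a \in window s)%:R : R) =
          #|(fun s => a - s) @^-1: [set d | (val d < n)%N]|%:R.
  by rewrite card_preimset ?card_initial_segment.
rewrite -sum1_card natr_sum [RHS]big_mkcond /=.
by apply: eq_bigr => s _; rewrite !inE; case: ifP.
Qed.

Lemma uniform_window_mass (a : 'I_k.+1) :
  (n <= k.+1)%N -> \sum_s (uniform s : R) * (a \in window s)%:R = n%:R / k.+1%:R.
Proof. by move=> n_le; rewrite -mulr_sumr window_count // /uniform card_ord mulrC. Qed.

End Window.

Theorem theorem5p5 (R : realType) (m n : nat) (hn : (0 < n)%N) (hnm : (n <= m)%N) :
  exists (A : finType) (S : finType) (P : S -> R) (Cw Cl : S -> {set A}),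
    is_pmf P /\
    (forall s : S, (m <= #|Cw s|)%N /\ (#|Cl s| <= n)%N) /\
    (forall M : agent -> option A -> option A -> R, is_policy M ->
       n%:R / (2 * m%:R) <= piddg_error P Cw Cl M).
Proof.
case: m hnm => [|k] n_le; first by case: n hn n_le.
pose X : R := n%:R / k.+1%:R.
have X_ge0 : 0 <= X by rewrite divr_ge0.
have X_le1 : X <= 1 by rewrite ler_pdivrMr ?ltr0Sn // mul1r ler_nat.
have P_pmf := uniform_pmf R (@ord0 k).
have cover (b : 'I_k.+1) : X <= \sum_s uniform s * (b \in window n s)%:R.
  by rewrite uniform_window_mass.
exists 'I_k.+1, 'I_k.+1, uniform, (fun=> [set: 'I_k.+1]), (window n).
split=> //; split=> [s|M M_pol]; first by rewrite cardsT card_ord card_window.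
have M_ge0 N i a1 a2 : is_policy N -> 0 <= N i a1 a2 by case=> /(_ i a1 a2) /andP[].
suff : X <= game_value uniform (window n) (fun=> [set: 'I_k.+1]) M Ag1 +
            game_value uniform (fun=> [set: 'I_k.+1]) (window n) M Ag2.
  by rewrite /piddg_error invfM mulrCA -/X; lra.
apply/ler_addgt0Pr => eps eps_gt0.
have [c [p [q [p_pmf q_pmf p_ge q_le]]]] := minimax_approx (M Ag1) None None eps_gt0.
have v1_ge : X * c <= game_value uniform (window n) (fun=> [set: 'I_k.+1]) M Ag1.
  apply: game_value1_ge (restrict_strategyP p_pmf) _ => //.
  by apply: informed_guarantee => // a y; exact: M_ge0.
have v2_ge : X * (1 - (c + eps)) <=
             game_value uniform (fun=> [set: 'I_k.+1]) (window n) M Ag2.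
  apply: game_value2_ge (restrict_strategyP q_pmf) _ => // sg1 sg1_strat.
  rewrite exp_payoff_swap; apply: informed_guarantee => // [a y|y].
    exact/M_ge0/swap_policyP.
  by rewrite swap_policy_mean //; have := q_le y; lra.
have : X * eps <= eps by rewrite ler_piMl // ltW.
lra.
Qed.
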